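(* Let $\mathcal D=\{(i_m,\mathbf X_m,S_m)\}_{m=1}^t$ with $S_m\subseteq[N]$ and features $\mathbf x_{mj}\in\mathbb R^d$, and let $\boldsymbol\theta^\star\in\mathbb R^d$. For any $\boldsymbol\theta\in\mathbb R^d$, with $\zeta_{\boldsymbol\theta}=3\sqrt2\max_{m\le t,j\in S_m}|\mathbf x_{mj}^\top(\boldsymbol\theta-\boldsymbol\theta^\star)|$ and $\varphi(\zeta)=\big(\frac{e^\zeta-1}\zeta-1\big)(1+\zeta)$, $$\frac1{1+2\varphi(\zeta_{\boldsymbol\theta})}\mathbf H(\boldsymbol\theta^\star)\preceq\mathbf H(\boldsymbol\theta)\preceq(1+2\varphi(\zeta_{\boldsymbol\theta}))\mathbf H(\boldsymbol\theta^\star).$$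
   Context: $q_{mj}(\boldsymbol\theta)=\exp(\mathbf x_{mj}^\top\boldsymbol\theta)/(1+\sum_{k\in S_m}\exp(\mathbf x_{mk}^\top\boldsymbol\theta))$ for $j\in S_m$. $\mathbf H(\boldsymbol\theta)=\sum_{m=1}^t\Big(\sum_{j\in S_m}q_{mj}(\boldsymbol\theta)\mathbf x_{mj}\mathbf x_{mj}^\top-\sum_{i\in S_m}\sum_{j\in S_m}q_{mi}(\boldsymbol\theta)q_{mj}(\boldsymbol\theta)\mathbf x_{mi}\mathbf x_{mj}^\top\Big)$, the Hessian of the MNL negative log-likelihood of $\mathcal D$. $\varphi(0)$ is understood as its limit $0$. *)

From HB Require Import structures.
From mathcomp Require Import all_boot all_order all_algebra.
From mathcomp Require Import reals.
From mathcomp.analysis Require Import sequences exp.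
Set Implicit Arguments. Unset Strict Implicit. Unset Printing Implicit Defensive.
Import Order.TTheory GRing.Theory Num.Theory.
Local Open Scope ring_scope.

Section MNL.
Variables (R : realType) (t N d : nat).

Definition inner (u v : 'cV[R]_d) : R := (trmx u *m v) 0 0.

Definition mnl_q (S : 'I_t -> {set 'I_N}) (x : 'I_t -> 'I_N -> 'cV[R]_d)
  (theta : 'cV[R]_d) (m : 'I_t) (j : 'I_N) : R :=
  expR (inner (x m j) theta) /
  (1 + \sum_(k in S m) expR (inner (x m k) theta)).

Definition mnl_H (S : 'I_t -> {set 'I_N}) (x : 'I_t -> 'I_N -> 'cV[R]_d)
  (theta : 'cV[R]_d) : 'M[R]_d :=
  \sum_(m < t)
    (\sum_(j in S m) mnl_q S x theta m j *: (x m j *m trmx (x m j))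
     - \sum_(i in S m) \sum_(j in S m)
         (mnl_q S x theta m i * mnl_q S x theta m j) *: (x m i *m trmx (x m j))).

Definition mnl_zeta (S : 'I_t -> {set 'I_N}) (x : 'I_t -> 'I_N -> 'cV[R]_d)
  (theta thetas : 'cV[R]_d) : R :=
  3 * Num.sqrt 2 *
  \big[Num.max/0]_(m < t) \big[Num.max/0]_(j in S m)
      `|inner (x m j) (theta - thetas)|.
End MNL.

(* phi(z) = ((e^z - 1)/z - 1)(1 + z), with phi(0) := 0 (its limit). *)
Definition phi {R : realType} (z : R) : R :=
  if z == 0 then 0 else ((expR z - 1) / z - 1) * (1 + z).

Definition loewner_le {R : realType} {d : nat} (A B : 'M[R]_d) : Prop :=
  forall v : 'cV[R]_d, 0 <= (trmx v *m (B - A) *m v) 0 0.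

From HB Require Import structures.
From mathcomp Require Import all_boot all_order all_algebra.
From mathcomp Require Import reals.
From mathcomp.analysis Require Import sequences exp.
From mathcomp Require Import lra ring.
Import Order.TTheory GRing.Theory Num.Theory.
Set Implicit Arguments. Unset Strict Implicit. Unset Printing Implicit Defensive.
Local Open Scope ring_scope.

(* For every v, v^T H(theta) v is a sum over rounds m of the variance of the
   values x_mj^T v under the choice distribution q_m(theta), the no-choice
   option having value 0.  If every score x_mj^T theta moves by at most M
   between theta and theta*, every choice probability (no-choice included)
   changes by a factor at most e^(2M); as a variance is the least expected
   squared deviation from a constant, it changes by the same factor.  Finally
   e^(2M) <= e^(zeta/2) <= 1 + 2 phi(zeta). *)

Section SoftmaxVariance.
Variables (R : realFieldType) (I : finType) (P : pred I).
Implicit Types (w e a : I -> R) (c K : R).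

(* The weights [w] on [P] leave the mass [1 - \sum w] on an extra point of
   value 0. *)
Definition wmean w a : R := \sum_(j | P j) w j * a j.
Definition wvar w a : R := \sum_(j | P j) w j * a j ^+ 2 - wmean w a ^+ 2.
Definition wsqdev w a c : R :=
  \sum_(j | P j) w j * (a j - c) ^+ 2 + (1 - \sum_(j | P j) w j) * c ^+ 2.

Lemma wsqdevE w a c : wsqdev w a c = wvar w a + (wmean w a - c) ^+ 2.
Proof.
rewrite /wsqdev /wvar /wmean.
have -> : \sum_(j | P j) w j * (a j - c) ^+ 2 =
    \sum_(j | P j) w j * a j ^+ 2 - 2 * c * \sum_(j | P j) w j * a j
    + c ^+ 2 * \sum_(j | P j) w j.
  rewrite !mulr_sumr -sumrB -big_split; apply: eq_bigr => j _ /=; ring.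
ring.
Qed.

Lemma wvar_wsqdev w a : wvar w a = wsqdev w a (wmean w a).
Proof. by rewrite wsqdevE subrr expr0n addr0. Qed.

Lemma wvar_ge0 w a :
  (forall j, P j -> 0 <= w j) -> 0 <= 1 - \sum_(j | P j) w j -> 0 <= wvar w a.
Proof.
move=> w_ge0 w0_ge0; rewrite wvar_wsqdev.
apply: addr_ge0; last exact: mulr_ge0 w0_ge0 (sqr_ge0 _).
by apply: sumr_ge0 => j Pj; exact: mulr_ge0 (w_ge0 j Pj) (sqr_ge0 _).
Qed.

Lemma wvar_le_scale w w' a K :
  (forall j, P j -> w' j <= K * w j) ->
  1 - \sum_(j | P j) w' j <= K * (1 - \sum_(j | P j) w j) ->
  wvar w' a <= K * wvar w a.
Proof.
move=> w'_le w'0_le; rewrite [wvar w a]wvar_wsqdev.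
(* Both sides are compared through the squared deviation from the mean of [w]. *)
apply: (@le_trans _ _ (wsqdev w' a (wmean w a))).
  by rewrite wsqdevE lerDl sqr_ge0.
rewrite /wsqdev mulrDr mulr_sumr; apply: lerD.
  apply: ler_sum => j Pj; rewrite [leRHS]mulrA.
  by apply: (ler_wpM2r (sqr_ge0 _)); exact: w'_le.
by rewrite [leRHS]mulrA; apply: (ler_wpM2r (sqr_ge0 _)).
Qed.

Definition softmax e j : R := e j / (1 + \sum_(k | P k) e k).

Section NonnegScores.
Variable e : I -> R.
Hypothesis e_ge0 : forall j, P j -> 0 <= e j.

Lemma partition_ge1 : 1 <= 1 + \sum_(k | P k) e k.
Proof. by rewrite lerDl sumr_ge0. Qed.

Lemma softmax_ge0 j : P j -> 0 <= softmax e j.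
Proof.
by move=> Pj; rewrite divr_ge0 ?e_ge0 // (le_trans ler01 partition_ge1).
Qed.

Lemma softmax_rest : 1 - \sum_(j | P j) softmax e j = (1 + \sum_(k | P k) e k)^-1.
Proof.
have Z_neq0 : 1 + \sum_(k | P k) e k != 0.
  by rewrite gt_eqF // (lt_le_trans ltr01 partition_ge1).
rewrite -mulr_suml; set s := \sum_(k | P k) e k in Z_neq0 *; by field.
Qed.

Lemma wvar_softmax_ge0 a : 0 <= wvar (softmax e) a.
Proof.
apply: wvar_ge0; first exact: softmax_ge0.
by rewrite softmax_rest invr_ge0 (le_trans ler01 partition_ge1).
Qed.

End NonnegScores.

Lemma partition_le e e' K : 1 <= K -> (forall j, P j -> e j <= K * e' j) ->
  1 + \sum_(k | P k) e k <= K * (1 + \sum_(k | P k) e' k).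
Proof. by move=> K_ge1 e_le; rewrite mulrDr mulr1 mulr_sumr lerD // ler_sum. Qed.

Section ComparableScores.
Variables (e e' : I -> R) (K : R).
Hypotheses (e_ge0 : forall j, P j -> 0 <= e j) (e'_ge0 : forall j, P j -> 0 <= e' j).
Hypothesis K_ge1 : 1 <= K.
Hypotheses (e_le : forall j, P j -> e j <= K * e' j)
           (e'_le : forall j, P j -> e' j <= K * e j).

Lemma softmax_le j : P j -> softmax e j <= K ^+ 2 * softmax e' j.
Proof.
move=> Pj; have Z'_le := partition_le K_ge1 e'_le.
have Z_gt0 := lt_le_trans ltr01 (partition_ge1 e_ge0).
have Z'_gt0 := lt_le_trans ltr01 (partition_ge1 e'_ge0).
rewrite /softmax; set Z := 1 + \sum_(k | P k) e k in Z'_le Z_gt0 *.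
set Z' := 1 + \sum_(k | P k) e' k in Z'_le Z'_gt0 *.
have -> : K ^+ 2 * (e' j / Z') = (K * e' j) * (K * Z) / Z' / Z.
  by field; rewrite !gt_eqF.
rewrite ler_pM2r ?invr_gt0 // ler_pdivlMr //.
by apply: ler_pM; rewrite ?e_ge0 ?e_le ?(ltW Z'_gt0).
Qed.

Lemma softmax_rest_le :
  1 - \sum_(j | P j) softmax e j <= K ^+ 2 * (1 - \sum_(j | P j) softmax e' j).
Proof.
have Z'_le := partition_le K_ge1 e'_le.
have Z_gt0 := lt_le_trans ltr01 (partition_ge1 e_ge0).
have Z'_gt0 := lt_le_trans ltr01 (partition_ge1 e'_ge0).
rewrite !softmax_rest //; set Z := 1 + \sum_(k | P k) e k in Z'_le Z_gt0 *.
set Z' := 1 + \sum_(k | P k) e' k in Z'_le Z'_gt0 *.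
rewrite ler_pdivlMr // mulrC ler_pdivrMr // (le_trans Z'_le) // ler_wpM2r ?(ltW Z_gt0) //.
by rewrite -[leLHS]mul1r ler_wpM2r ?(le_trans ler01).
Qed.

Lemma wvar_softmax_le a : wvar (softmax e) a <= K ^+ 2 * wvar (softmax e') a.
Proof. exact: wvar_le_scale softmax_le softmax_rest_le. Qed.

End ComparableScores.
End SoftmaxVariance.

Lemma expR_half_le_phi (R : realType) (z : R) : 0 <= z -> expR (z / 2) <= 1 + 2 * phi z.
Proof.
move=> z_ge0; rewrite /phi; have [->|z_neq0] := eqVneq z 0.
  by rewrite mul0r expR0 mulr0 addr0.
have z_gt0 : 0 < z by rewrite lt_neqAle eq_sym z_neq0.
set E := expR (z / 2).
have expRzE : expR z = E ^+ 2 by rewrite -expRM_natl; congr expR; field.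
have E_ge : 1 + z / 2 <= E := expR_ge1Dx _.
rewrite expRzE.
have -> : 1 + 2 * (((E ^+ 2 - 1) / z - 1) * (1 + z)) =
    (z + 2 * (E ^+ 2 - 1 - z) * (1 + z)) / z by field; rewrite gt_eqF.
rewrite ler_pdivlMr //.
have [u u_ge0 ->] : exists2 u, 0 <= u & E = 1 + z / 2 + u.
  by exists (E - (1 + z / 2)); rewrite ?subr_ge0 // addrC subrK.
nra.
Qed.

Lemma sqr_expR_le_phi (R : realType) (M : R) :
  0 <= M -> expR M ^+ 2 <= 1 + 2 * phi (3 * Num.sqrt 2 * M).
Proof.
move=> M_ge0.
have sqrt2_ge : 4 / 3 <= Num.sqrt 2 :> R.
  have := sqr_sqrtr (ler0n R 2); have := sqrtr_ge0 (2 : R); rewrite expr2; nra.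
have zeta_ge0 : 0 <= 3 * Num.sqrt 2 * M by rewrite !mulr_ge0 ?sqrtr_ge0.
apply: le_trans (expR_half_le_phi zeta_ge0).
rewrite -expRM_natl ler_expR; nra.
Qed.

Section QuadraticForm.
Variables (R : comPzRingType) (d : nat) (v : 'cV[R]_d).

Definition qform (A : 'M[R]_d) : R := (trmx v *m A *m v) 0 0.

Lemma qformD A B : qform (A + B) = qform A + qform B.
Proof. by rewrite /qform mulmxDr mulmxDl mxE. Qed.

Lemma qform0 : qform 0 = 0.
Proof. by rewrite /qform mulmx0 mul0mx mxE. Qed.

Lemma qformB A B : qform (A - B) = qform A - qform B.
Proof. by rewrite /qform mulmxBr mulmxBl !mxE. Qed.

Lemma qformZ k A : qform (k *: A) = k * qform A.
Proof. by rewrite /qform -scalemxAr -scalemxAl mxE. Qed.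

Lemma qform_sum (I : Type) (r : seq I) (P : pred I) (F : I -> 'M[R]_d) :
  qform (\sum_(i <- r | P i) F i) = \sum_(i <- r | P i) qform (F i).
Proof. exact: (big_morph qform qformD qform0). Qed.

End QuadraticForm.

Section MNLHessian.
Variables (R : realType) (t N d : nat).
Variables (S : 'I_t -> {set 'I_N}) (x : 'I_t -> 'I_N -> 'cV[R]_d).

Lemma inner_sym (a b : 'cV[R]_d) : inner a b = inner b a.
Proof. by rewrite /inner -[trmx b *m a]trmxK trmx_mul trmxK [RHS]mxE. Qed.

Lemma innerBr (u a b : 'cV[R]_d) : inner u (a - b) = inner u a - inner u b.
Proof. by rewrite /inner mulmxBr !mxE. Qed.

Lemma qform_outer (v a b : 'cV[R]_d) : qform v (a *m trmx b) = inner a v * inner b v.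
Proof.
rewrite /qform !mulmxA -(mulmxA _ (trmx b)) mxE big_ord1 [inner a v]inner_sym.
by rewrite /inner -[trmx b *m v]trmxK trmx_mul trmxK mxE.
Qed.

Lemma qform_mnl_H v theta :
  qform v (mnl_H S x theta) =
  \sum_(m < t) wvar (fun j => j \in S m) (mnl_q S x theta m) (fun j => inner (x m j) v).
Proof.
rewrite /mnl_H qform_sum; apply: eq_bigr => m _.
rewrite qformB !qform_sum /wvar /wmean; congr (_ - _).
  by apply: eq_bigr => j _; rewrite qformZ qform_outer mulrA.
rewrite expr2 mulr_suml; apply: eq_bigr => i _.
rewrite qform_sum mulr_sumr; apply: eq_bigr => j _.
rewrite qformZ qform_outer; ring.
Qed.

Lemma qform_mnl_H_ge0 v theta : 0 <= qform v (mnl_H S x theta).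
Proof.
rewrite qform_mnl_H; apply: sumr_ge0 => m _.
by apply: wvar_softmax_ge0 => j _; exact: expR_ge0.
Qed.

Lemma qform_mnl_H_le v theta theta' M : 0 <= M ->
  (forall m j, j \in S m -> `|inner (x m j) theta - inner (x m j) theta'| <= M) ->
  qform v (mnl_H S x theta) <= expR M ^+ 2 * qform v (mnl_H S x theta').
Proof.
move=> M_ge0 dist_le; rewrite !qform_mnl_H mulr_sumr; apply: ler_sum => m _.
apply: wvar_softmax_le => [j _|j _||j Sj|j Sj]; rewrite ?expR_ge0 -?expR0 ?ler_expR //.
  by rewrite -expRD ler_expR; have := dist_le m j Sj; rewrite ler_norml; lra.
by rewrite -expRD ler_expR; have := dist_le m j Sj; rewrite ler_norml; lra.
Qed.

End MNLHessian.

Theorem propositionB1 (R : realType) (t N d : nat)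
  (S : 'I_t -> {set 'I_N}) (x : 'I_t -> 'I_N -> 'cV[R]_d)
  (thetas theta : 'cV[R]_d) :
  let c := 1 + 2 * phi (mnl_zeta S x theta thetas) in
  loewner_le (c^-1 *: mnl_H S x thetas) (mnl_H S x theta) /\
  loewner_le (mnl_H S x theta) (c *: mnl_H S x thetas).
Proof.
move=> c.
pose M := \big[Num.max/0]_(m < t) \big[Num.max/0]_(j in S m)
  `|inner (x m j) (theta - thetas)|.
have M_ge0 : 0 <= M := bigmax_ge_id _ _ _ _.
have dist_le m j : j \in S m -> `|inner (x m j) theta - inner (x m j) thetas| <= M.
  move=> Sj; rewrite -innerBr; apply: le_trans (le_bigmax_cond _ _ (isT : xpredT m)).
  exact: (le_bigmax_cond _ _ Sj).
have dist_le' m j : j \in S m -> `|inner (x m j) thetas - inner (x m j) theta| <= M.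
  by move=> Sj; rewrite distrC dist_le.
have K_le_c : expR M ^+ 2 <= c := sqr_expR_le_phi M_ge0.
have c_gt0 : 0 < c := lt_le_trans (exprn_gt0 _ (expR_gt0 M)) K_le_c.
split=> v; rewrite -/(qform v _) qformB qformZ subr_ge0.
- rewrite ler_pdivrMl // (le_trans (qform_mnl_H_le v M_ge0 dist_le')) //.
  by rewrite ler_wpM2r ?qform_mnl_H_ge0.
- rewrite (le_trans (qform_mnl_H_le v M_ge0 dist_le)) //.
  by rewrite ler_wpM2r ?qform_mnl_H_ge0.
Qed.
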